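(* Let $N,d\in\mathbb N$, let $D$ be a set and $C\subseteq D$, and let $b_0,\ldots,b_N:D\to\mathbb R$ satisfy $b_k(\mathbf x)\ge0$ and $\sum_{k=0}^N b_k(\mathbf x)=1$ for all $\mathbf x\in C$. Let $\omega_0,\ldots,\omega_N>0$ and $\mathbf W_0,\ldots,\mathbf W_N\in\mathbb R^d$, and set $\mathbf S_N(\mathbf x):=\frac{\sum_{k=0}^N\omega_k\mathbf W_kb_k(\mathbf x)}{\sum_{k=0}^N\omega_kb_k(\mathbf x)}$ for $\mathbf x\in C$. Fix $\mathbf t,\mathbf u\in C$ with $b_k(\mathbf t)>0$ and $b_k(\mathbf u)>0$ for $1\le k\le N$. Define $h_0:=1$, $\mathbf Q_0:=\mathbf W_0$ and, for $k=1,\ldots,N$, $$h_k:=\left(1+\frac{\omega_{k-1}b_{k-1}(\mathbf t)}{h_{k-1}\,\omega_k b_k(\mathbf t)}\right)^{-1},\qquad \mathbf Q_k:=(1-h_k)\mathbf Q_{k-1}+h_k\mathbf W_k .$$ Assume $h_k\neq0$ for $1\le k\le N$, and suppose $$\frac{b_k(\mathbf t)}{b_{k+1}(\mathbf t)}\le\frac{b_k(\mathbf u)}{b_{k+1}(\mathbf u)}\qquad(0\le k\le N-1).$$ Then $\mathbf S_N(\mathbf u)\in\operatorname{conv}\{\mathbf Q_0,\mathbf Q_1,\ldots,\mathbf Q_N\}$.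
   Context: $\operatorname{conv}$ denotes the convex hull; $\mathbb E^d$ of the paper is identified with $\mathbb R^d$. *)

From mathcomp Require Import all_boot all_order all_algebra.
Set Implicit Arguments. Unset Strict Implicit. Unset Printing Implicit Defensive.
Import Order.TTheory GRing.Theory Num.Theory.
Local Open Scope ring_scope.

Definition in_conv_hull (R : realFieldType) (d : nat) (P : nat -> 'rV[R]_d)
  (N : nat) (x : 'rV[R]_d) : Prop :=
  exists lam : nat -> R,
    (forall k, (k <= N)%N -> 0 <= lam k) /\
    \sum_(k < N.+1) lam k = 1 /\
    x = \sum_(k < N.+1) lam k *: P k.

Definition SN (R : realFieldType) (d : nat) (D : Type) (N : nat)
  (b : nat -> D -> R) (omega : nat -> R) (W : nat -> 'rV[R]_d) (x : D)
  : 'rV[R]_d :=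
  (\sum_(k < N.+1) omega k * b k x)^-1 *: \sum_(k < N.+1) (omega k * b k x) *: W k.

(* h_0 = 1, h_k = (1 + omega_{k-1} b_{k-1}(t) / (h_{k-1} omega_k b_k(t)))^-1 ;
   bt k stands for b_k(t). *)
Fixpoint hseq (R : realFieldType) (bt : nat -> R) (omega : nat -> R) (k : nat) : R :=
  match k with
  | 0 => 1
  | k'.+1 => (1 + (omega k' * bt k') / (hseq bt omega k' * (omega k * bt k)))^-1
  end.

Fixpoint Qseq (R : realFieldType) (d : nat) (bt : nat -> R) (omega : nat -> R)
  (W : nat -> 'rV[R]_d) (k : nat) : 'rV[R]_d :=
  match k with
  | 0 => W 0
  | k'.+1 => (1 - hseq bt omega k) *: Qseq bt omega W k' + hseq bt omega k *: W k
  end.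

From mathcomp Require Import all_boot all_order all_algebra.

(* Write a_k = omega_k b_k(t), c_k = omega_k b_k(u) and A_k = a_0 + ... + a_k.
   The recursion for h_k unwinds to h_k = a_k / A_k, so that
   A_k Q_k = a_0 W_0 + ... + a_k W_k: the Q_k are the a-weighted prefix means
   of the W_k.  The ratio hypothesis says that the densities mu_k = c_k / a_k
   do not increase, and Abel summation
     sum_k c_k W_k = sum_k (mu_k - mu_(k+1)) A_k Q_k      (mu_(N+1) = 0)
   writes S_N(u) as a combination of the Q_k with nonnegative weights; the
   same identity with W = 1 shows that the weights sum to 1. *)

Set Implicit Arguments. Unset Strict Implicit. Unset Printing Implicit Defensive.
Import Order.TTheory GRing.Theory Num.Theory.
Local Open Scope ring_scope.

Lemma prefix_sum_ge0 (R : numDomainType) (N : nat) (a : nat -> R) :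
  0 <= a 0 -> (forall k, (1 <= k <= N)%N -> 0 < a k) ->
  forall k, (k <= N)%N -> 0 <= \sum_(j < k.+1) a j.
Proof.
move=> a0_ge0 a_gt0 k kN; apply: sumr_ge0 => -[[|j] /= jk] _ //.
by rewrite ltW ?a_gt0 //= (leq_trans _ kN) // -ltnS.
Qed.

Section AbelSummation.
Variables (R : fieldType) (N : nat) (a c : nat -> R).

Local Notation A k := (\sum_(j < k.+1) a j).

Definition density k := if (1 <= k <= N)%N then c k / a k else 0.

(* [density] vanishes outside [1, N]; since a_0 may be 0, the weight of
   Q_0 = W_0 is c_0 - a_0 mu_1 instead of A_0 (mu_0 - mu_1). *)
Definition abel_weight k :=
  if k is 0 then c 0 - a 0 * density 1 else A k * (density k - density k.+1).

Hypothesis a_neq0 : forall k, (1 <= k <= N)%N -> a k != 0.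

Lemma density_mul k : (1 <= k <= N)%N -> density k * a k = c k.
Proof. by move=> kN; rewrite /density kN divfK ?a_neq0. Qed.

Lemma density_out : density N.+1 = 0.
Proof. by rewrite /density ltnn andbF. Qed.

Lemma abel_partial_sum (V : lmodType R) (W Q : nat -> V) :
  Q 0 = W 0 ->
  (forall k, (k <= N)%N -> A k *: Q k = \sum_(j < k.+1) a j *: W j) ->
  forall n, (n <= N)%N ->
  \sum_(k < n.+1) abel_weight k *: Q k =
    \sum_(k < n.+1) c k *: W k - density n.+1 *: \sum_(j < n.+1) a j *: W j.
Proof.
move=> Q0 AQ; elim=> [|n IH] nN.
  by rewrite !big_ord1 /= Q0 scalerA -scalerBl [a 0 * _]mulrC.
rewrite big_ord_recr /= (IH (ltnW nN)).
rewrite [_ * (density _ - _)]mulrC -scalerA AQ //.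
rewrite [in RHS]big_ord_recr (big_ord_recr n.+1) /= scalerBl scalerDr scalerA.
by rewrite density_mul // !addrA subrK.
Qed.

Lemma abel_sum (V : lmodType R) (W Q : nat -> V) :
  Q 0 = W 0 ->
  (forall k, (k <= N)%N -> A k *: Q k = \sum_(j < k.+1) a j *: W j) ->
  \sum_(k < N.+1) abel_weight k *: Q k = \sum_(k < N.+1) c k *: W k.
Proof.
by move=> Q0 AQ; rewrite (abel_partial_sum Q0 AQ) // density_out scale0r subr0.
Qed.

Lemma abel_weight_sum : \sum_(k < N.+1) abel_weight k = \sum_(k < N.+1) c k.
Proof.
have := @abel_sum R^o (fun=> 1) (fun=> 1) erefl (fun k _ => scaler_suml _ _ _ _).
by rewrite -!scaler_suml /GRing.scale /= !mulr1.
Qed.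

End AbelSummation.

Section AbelWeightsNonneg.
Variables (R : realFieldType) (N : nat) (a c : nat -> R).

Local Notation density := (density N a c).

Hypothesis a0_ge0 : 0 <= a 0.
Hypothesis a_gt0 : forall k, (1 <= k <= N)%N -> 0 < a k.
Hypothesis c_ge0 : forall k, (k <= N)%N -> 0 <= c k.
Hypothesis c_over_a_nonincr : forall k, (k < N)%N -> a k * c k.+1 <= c k * a k.+1.

Lemma density_ge0 k : 0 <= density k.
Proof.
rewrite /density; case: ifP => // /[dup] /andP[_ kN] /a_gt0 ak_gt0.
by rewrite divr_ge0 ?c_ge0 ?ltW.
Qed.

Lemma density_leS k : (1 <= k)%N -> density k.+1 <= density k.
Proof.
move=> k_ge1; rewrite {1}/density; case: ifP => [/andP[_ kN] | _]; last first.
  exact: density_ge0.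
have kN' : (1 <= k <= N)%N by rewrite k_ge1 ltnW.
rewrite /density kN' ler_pdivrMr ?a_gt0 // mulrAC ler_pdivlMr ?a_gt0 //.
by rewrite mulrC c_over_a_nonincr.
Qed.

Lemma abel_weight_ge0 k : (k <= N)%N -> 0 <= abel_weight N a c k.
Proof.
case: k => [_ | k kN] /=.
  rewrite subr_ge0 {1}/density; case: ifP => [N_ge1 | _]; last first.
    by rewrite mulr0 c_ge0.
  by rewrite mulrA ler_pdivrMr ?a_gt0 // c_over_a_nonincr.
by rewrite mulr_ge0 ?subr_ge0 ?density_leS // (prefix_sum_ge0 a0_ge0 a_gt0).
Qed.

End AbelWeightsNonneg.

Lemma in_conv_hull_prefix_means (R : realFieldType) (d N : nat) (a c : nat -> R)
    (W Q : nat -> 'rV[R]_d) :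
  0 <= a 0 -> (forall k, (1 <= k <= N)%N -> 0 < a k) ->
  (forall k, (k <= N)%N -> 0 <= c k) -> 0 < \sum_(k < N.+1) c k ->
  (forall k, (k < N)%N -> a k * c k.+1 <= c k * a k.+1) ->
  Q 0 = W 0 ->
  (forall k, (k <= N)%N ->
     (\sum_(j < k.+1) a j) *: Q k = \sum_(j < k.+1) a j *: W j) ->
  in_conv_hull Q N ((\sum_(k < N.+1) c k)^-1 *: \sum_(k < N.+1) c k *: W k).
Proof.
move=> a0_ge0 a_gt0 c_ge0 c_sum_gt0 c_over_a Q0 AQ.
have a_neq0 k : (1 <= k <= N)%N -> a k != 0 by move/a_gt0/lt0r_neq0.
exists (fun k => (\sum_(k < N.+1) c k)^-1 * abel_weight N a c k); split.
  move=> k kN; apply: mulr_ge0; first by rewrite invr_ge0 ltW.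
  exact: abel_weight_ge0 a0_ge0 a_gt0 c_ge0 c_over_a _ kN.
rewrite -mulr_sumr abel_weight_sum // mulVf ?lt0r_neq0 //; split=> //.
rewrite -(abel_sum c a_neq0 Q0 AQ) scaler_sumr.
by apply: eq_bigr => k _; rewrite scalerA.
Qed.

Section PrefixMeans.
Variables (R : realFieldType) (d N : nat) (bt omega : nat -> R) (W : nat -> 'rV[R]_d).

Local Notation a k := (omega k * bt k).
Local Notation hseq := (hseq bt omega).
Local Notation Qseq := (Qseq bt omega W).

Hypothesis a0_ge0 : 0 <= a 0.
Hypothesis a_gt0 : forall k, (1 <= k <= N)%N -> 0 < a k.

Lemma prefix_sum_gt0 k : (k < N)%N -> 0 < \sum_(j < k.+2) a j.
Proof.
move=> kN; rewrite big_ord_recr /= ltr_wpDl ?a_gt0 //.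
exact: prefix_sum_ge0 a0_ge0 a_gt0 _ (ltnW kN).
Qed.

Lemma weight_div_hseq k : (k <= N)%N -> a k / hseq k = \sum_(j < k.+1) a j.
Proof.
elim: k => [|k IH] kN; first by rewrite big_ord1 /= divr1.
have ak_neq0 : a k.+1 != 0 by rewrite gt_eqF ?a_gt0.
rewrite /= invrK invfM mulrA (IH (ltnW kN)) [in RHS]big_ord_recr /=.
by rewrite mulrDr mulr1 mulrCA divff // mulr1 addrC.
Qed.

Lemma hseq_prefix k : (k < N)%N -> hseq k.+1 = a k.+1 / \sum_(j < k.+2) a j.
Proof.
by move=> kN; rewrite -weight_div_hseq // divKf // gt_eqF ?a_gt0.
Qed.

Lemma Qseq_prefix k : (k <= N)%N ->
  (\sum_(j < k.+1) a j) *: Qseq k = \sum_(j < k.+1) a j *: W j.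
Proof.
elim: k => [|k IH] kN; first by rewrite !big_ord1.
have A_neq0 := lt0r_neq0 (prefix_sum_gt0 kN).
rewrite /= -/(hseq k.+1) hseq_prefix // scalerDr !scalerA mulrBr mulr1 mulrCA divff //.
rewrite mulr1 [in LHS]big_ord_recr /= addrK (IH (ltnW kN)) //.
by rewrite [in RHS]big_ord_recr.
Qed.

End PrefixMeans.

Lemma weighted_sum_gt0 (R : realFieldType) (N : nat) (w x : nat -> R) :
  (forall k, (k <= N)%N -> 0 < w k) -> (forall k, (k <= N)%N -> 0 <= x k) ->
  \sum_(k < N.+1) x k = 1 -> 0 < \sum_(k < N.+1) w k * x k.
Proof.
move=> w_gt0 x_ge0 x_sum1.
have wk_gt0 (k : 'I_N.+1) : 0 < w k by rewrite w_gt0 // -ltnS.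
have xk_ge0 (k : 'I_N.+1) : 0 <= x k by rewrite x_ge0 // -ltnS.
have wx_ge0 (k : 'I_N.+1) : 0 <= w k * x k := mulr_ge0 (ltW (wk_gt0 k)) (xk_ge0 k).
rewrite lt0r sumr_ge0 // andbT psumr_neq0 //.
have : \sum_(k < N.+1) x k != 0 by rewrite x_sum1 oner_neq0.
rewrite psumr_neq0 //; apply: sub_has => k /=.
by rewrite pmulr_rgt0.
Qed.

Theorem theorem2 (R : realFieldType) (N d : nat) (D : Type) (C : D -> Prop)
  (b : nat -> D -> R)
  (hb_nonneg : forall x, C x -> forall k, (k <= N)%N -> 0 <= b k x)
  (hb_sum : forall x, C x -> \sum_(k < N.+1) b k x = 1)
  (omega : nat -> R) (homega : forall k, (k <= N)%N -> 0 < omega k)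
  (W : nat -> 'rV[R]_d)
  (t u : D) (Ct : C t) (Cu : C u)
  (hbt : forall k, (1 <= k <= N)%N -> 0 < b k t)
  (hbu : forall k, (1 <= k <= N)%N -> 0 < b k u)
  (hh : forall k, (1 <= k <= N)%N -> hseq (fun k => b k t) omega k != 0)
  (hratio : forall k, (k < N)%N -> b k t / b k.+1 t <= b k u / b k.+1 u) :
  in_conv_hull (Qseq (fun k => b k t) omega W) N (SN N b omega W u).
Proof.
(* [hh] is redundant: h_k = a_k / A_k > 0 by [hseq_prefix]. *)
have a0_ge0 : 0 <= omega 0 * b 0 t := mulr_ge0 (ltW (homega 0 isT)) (hb_nonneg _ Ct 0 isT).
have a_gt0 k : (1 <= k <= N)%N -> 0 < omega k * b k t.
  by move=> /[dup] /andP[_ kN] /hbt; apply: mulr_gt0; apply: homega.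
have AQ := Qseq_prefix (bt := fun k => b k t) W a0_ge0 a_gt0.
apply: (in_conv_hull_prefix_means (c := fun k => omega k * b k u) (W := W)
          a0_ge0 a_gt0 _ _ _ erefl AQ).
- by move=> k kN; rewrite mulr_ge0 ?hb_nonneg // ltW ?homega.
- exact: weighted_sum_gt0 homega (hb_nonneg _ Cu) (hb_sum _ Cu).
- move=> k kN; have := hratio k kN.
  rewrite ler_pdivrMr ?hbt // mulrAC ler_pdivlMr ?hbu // => cross.
  have omega_gt0 : 0 < omega k * omega k.+1 by rewrite mulr_gt0 ?homega // ltnW.
  by rewrite mulrACA [X in _ <= X]mulrACA ler_wpM2l ?(ltW omega_gt0).
Qed.
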